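(* Assume parts (i), (iii), (iv), (v) of Assumption (S) (with $L_{f;\mathsf{x}}\ge1$), $\ell\ge2$, and $\ell h\,(1+L_{f;\mathsf{x}}+g_{\max}^2L_{\mathsf{sc},*})\le1$. Then there is an absolute constant $C$ such that for every $k\in\{0,1,\dots,T/h\}$, $$\mathbb{E}\|\widetilde{x}_{kh}\|^2\le C\exp(CL_{f;\mathsf{x}}^2T)\Big(\mathbb{E}\|\widetilde{x}_T\|^2+R^2+\ell^2h^2L_{f;\mathsf{t}}^2+g_{\max}^4\max_{k'\in\{0,\dots,T/h\}}\mathbb{E}\|\nabla\ln q_{k'h}(\widetilde{x}_{k'h})\|^2\Big).$$
   Context: Forward process: $dx_t=f_t(x_t)\,dt+g(t)\,dW_t$, $x_0\sim q$, on $\mathbb{R}^d$ with $g(t)>0$; $q_t$ is the law of $x_t$ (smooth positive density), $T>0$, $q^\leftarrow_t\triangleq q_{T-t}$. Assumption (S) parts: (i) $f_t(x)$ is $L_{f;\mathsf{t}}$-Lipschitz in $t$ and $L_{f;\mathsf{x}}$-Lipschitz in $x$; (iii) $\|f_t(0)\|\le R$; (iv) $g(t)\le g_{\max}$; (v) $\nabla\ln q^\leftarrow_t$ is $L_{\mathsf{sc},t}$-Lipschitz, $L_{\mathsf{sc},*}=\sup_tL_{\mathsf{sc},t}$. Restoration operator: $R_{t\to s}(x)\triangleq x-(t-s)f_t(x)+(t-s)g(t)^2\nabla\ln q_t(x)$. Degradation operator: $D^\gamma_{s\to t}(x)\triangleq x+(t-s)f_s(x)+g(s)\sqrt{t-s}\,\gamma$.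 Sampler: $h>0$ with $T/h\in\mathbb{N}$, $\ell\in\mathbb{N}$; draw $\widetilde{x}_T\sim q_T$; for $k=T/h,\dots,1$: if $k\ge\ell$, $z=R_{kh\to(k-\ell)h}(\widetilde{x}_{kh})$, $\gamma=(\widetilde{x}_{kh}-z-\ell hf_{(k-\ell)h}(z))/(g((k-\ell)h)\sqrt{\ell h})$, $\widetilde{x}_{(k-1)h}=D^\gamma_{(k-\ell)h\to(k-1)h}(z)$; if $k<\ell$, $\widetilde{x}_{(k-1)h}=\widetilde{x}_{kh}-h(f_{kh}(\widetilde{x}_{kh})-\tfrac12g(kh)^2\nabla\ln q_{kh}(\widetilde{x}_{kh}))$. *)

From HB Require Import structures.
From mathcomp Require Import all_boot all_order all_algebra.
From mathcomp Require Import all_classical all_reals all_analysis.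
Set Implicit Arguments. Unset Strict Implicit. Unset Printing Implicit Defensive.
Import Order.TTheory GRing.Theory Num.Theory.
Import numFieldNormedType.Exports.
Local Open Scope ring_scope.

Section Defs.
Variables (R : realType) (d : nat).
Notation vec := 'rV[R]_d.

Definition sqn (x : vec) : R := \sum_(i < d) (x 0 i) ^+ 2.
Definition enorm (x : vec) : R := Num.sqrt (sqn x).

Definition gradient (F : vec -> R) (x : vec) : vec :=
  \row_(i < d) ('D_(delta_mx 0 i) F x).

Definition score (q : R -> vec -> R) (t : R) (x : vec) : vec :=
  gradient (fun y => ln (q t y)) x.

Variables (f : R -> vec -> vec) (g : R -> R) (sc : R -> vec -> vec).

Definition restore (t s : R) (x : vec) : vec :=
  x - (t - s) *: f t x + ((t - s) * g t ^+ 2) *: sc t x.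

Definition degrade (s t : R) (gam x : vec) : vec :=
  x + (t - s) *: f s x + (g s * Num.sqrt (t - s)) *: gam.

(* one step of the sampler: from xtilde_{kh} to xtilde_{(k-1)h} *)
Definition sampler_step (h : R) (l k : nat) (x : vec) : vec :=
  if (l <= k)%N then
    let z := restore (k%:R * h) ((k - l)%:R * h) x in
    let gam := (g ((k - l)%:R * h) * Num.sqrt (l%:R * h))^-1 *:
               (x - z - (l%:R * h) *: f ((k - l)%:R * h) z) in
    degrade ((k - l)%:R * h) ((k.-1)%:R * h) gam z
  else x - h *: (f (k%:R * h) x - (2^-1 * g (k%:R * h) ^+ 2) *: sc (k%:R * h) x).

(* after j steps starting from xtilde_{Nh} = x0 one has xtilde_{(N-j)h} *)
Fixpoint sampler_iter (h : R) (l N : nat) (x0 : vec) (j : nat) : vec :=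
  match j with
  | 0 => x0
  | j'.+1 => sampler_step h l (N - j') (sampler_iter h l N x0 j')
  end.

(* xtilde_{kh} for 0 <= k <= N, where T = N h *)
Definition xtilde (h : R) (l N : nat) (x0 : vec) (k : nat) : vec :=
  sampler_iter h l N x0 (N - k).

End Defs.

From HB Require Import structures.
From mathcomp Require Import all_boot all_order all_algebra.
From mathcomp Require Import all_classical all_reals all_analysis.
From mathcomp Require Import ring lra measurable_realfun.
Import Order.TTheory GRing.Theory Num.Theory.
Import numFieldNormedType.Exports.
Local Open Scope ring_scope.
Set Implicit Arguments. Unset Strict Implicit. Unset Printing Implicit Defensive.

(* Once the noise gamma is recovered from the current point, every step of
   the sampler is deterministic and has the form x |-> x + h v.  In both
   regimes (restoration-degradation for k >= l, Euler for k < l) the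
   increment satisfies |v|^2 <= 48 (L^2 |x|^2 + R^2 + g_max^4 |s(x)|^2),
   where s is the score at the current time; for the restoration step this
   uses that both coefficients of v lie in [-1, 1] and that l h L <= 1.
   Young's inequality then gives a one-step growth bound
   |x'|^2 <= (1 + 97 L^2 h) |x|^2 + 96 h (R^2 + g_max^4 |s(x)|^2), and a
   discrete Gronwall argument bounds |xtilde_{kh}|^2 pathwise.

   Taking expectations requires the iterates to be random vectors: every
   sampler map is Lipschitz, and Lipschitz images of random vectors are
   measurable (via boxes with rational corners).  Integrating the pathwise
   bound, replacing each score term by the worst one, and absorbing
   1 + 96 (T + h) into the exponential gives the theorem with C = 193. *)

Section SquaredNorm.
Variables (R : realType) (d : nat).
Local Notation vec := 'rV[R]_d.
Implicit Types (x y u v : vec).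

Lemma sqn_ge0 x : 0 <= sqn x.
Proof. by apply: sumr_ge0 => i _; exact: sqr_ge0. Qed.

Lemma sqnZ (c : R) x : sqn (c *: x) = c ^+ 2 * sqn x.
Proof. by rewrite /sqn mulr_sumr; apply: eq_bigr => i _; rewrite mxE exprMn. Qed.

Lemma sqnN x : sqn (- x) = sqn x.
Proof. by rewrite /sqn; apply: eq_bigr => i _; rewrite mxE sqrrN. Qed.

Lemma sqnD_young (e : R) x y : 0 < e ->
  sqn (x + y) <= (1 + e) * sqn x + (1 + e^-1) * sqn y.
Proof.
move=> e0; rewrite /sqn !mulr_sumr -big_split /=; apply: ler_sum => i _.
rewrite mxE; set a := x 0 i; set b := y 0 i.
have -> : (1 + e) * a ^+ 2 + (1 + e^-1) * b ^+ 2 =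
          (a + b) ^+ 2 + (e * a - b) ^+ 2 / e by field; rewrite gt_eqF.
by rewrite lerDl; apply: divr_ge0; [exact: sqr_ge0 | exact: ltW].
Qed.

Lemma sqnD2 x y : sqn (x + y) <= 2 * sqn x + 2 * sqn y.
Proof. by have := sqnD_young x y ltr01; rewrite invr1. Qed.

Lemma sqnB2 x y : sqn (x - y) <= 2 * sqn x + 2 * sqn y.
Proof. by apply: le_trans (sqnD2 _ _) _; rewrite sqnN. Qed.

Lemma sqn_comb (p r : R) u v : p ^+ 2 <= 1 -> r ^+ 2 <= 1 ->
  sqn (p *: u + r *: v) <= 2 * sqn u + 2 * sqn v.
Proof.
move=> hp hr; apply: le_trans (sqnD2 _ _) _; rewrite !sqnZ.
by have := sqn_ge0 u; have := sqn_ge0 v; nra.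
Qed.

Lemma sqn_coord x i : (x 0 i) ^+ 2 <= sqn x.
Proof. by rewrite /sqn (bigD1 i) //= lerDl; apply: sumr_ge0 => j _; exact: sqr_ge0. Qed.

(* The hypotheses of the theorem are stated with the Euclidean norm; the
   proof works with its square. *)
Lemma sqn_le_sqr x (c : R) : enorm x <= c -> sqn x <= c ^+ 2.
Proof.
rewrite /enorm => hx; rewrite -(sqr_sqrtr (sqn_ge0 x)).
by rewrite lerXn2r // ?nnegrE ?sqrtr_ge0 //; apply: le_trans hx; exact: sqrtr_ge0.
Qed.

Lemma sqn_le_lipschitz (K : R) x y : 0 <= K ->
  enorm x <= K * enorm y -> sqn x <= K ^+ 2 * sqn y.
Proof.
move=> K0 /sqn_le_sqr; rewrite exprMn /enorm sqr_sqrtr //; exact: sqn_ge0.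
Qed.

Lemma affine_growth (F : vec -> vec) (L2 R2 : R) x :
  (forall x y, sqn (F x - F y) <= L2 * sqn (x - y)) -> sqn (F 0) <= R2 ->
  sqn (F x) <= 2 * L2 * sqn x + 2 * R2.
Proof.
move=> HL H0; rewrite -(subrK (F 0) (F x)); apply: le_trans (sqnD2 _ _) _.
have := HL x 0; rewrite subr0 => h1.
by rewrite -mulrA; apply: lerD; rewrite ler_pM2l //; lra.
Qed.

End SquaredNorm.

(* With gamma recovered from the current point, the restoration-degradation
   step is deterministic: it is an explicit increment x + h v, whose two
   coefficients involve a = sqrt((l - 1)/l). *)
Lemma restoration_step_form (R : realType) d (f : R -> 'rV[R]_d -> 'rV[R]_d)
    g sc (h : R) (l k : nat) x :
  (1 <= l <= k)%N ->
  let t := k%:R * h in let s := (k - l)%:R * h in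
  let z := restore f g sc t s x in
  let a := g s * Num.sqrt ((k.-1)%:R * h - s) * (g s * Num.sqrt (l%:R * h))^-1 in
  sampler_step f g sc h l k x =
  x + h *: ((l%:R * (1 - a)) *: (g t ^+ 2 *: sc t x - f t x)
            + ((l%:R - 1) - a * l%:R) *: f s z).
Proof.
move=> /andP[l1 lk] t s z a.
have ets : t - s = l%:R * h by rewrite /t /s natrB //; ring.
have eds : (k.-1)%:R * h - s = (l%:R - 1) * h.
  by rewrite /s natrB // -subn1 natrB ?(leq_trans l1 lk) //; ring.
rewrite /sampler_step lk /= -/t -/s -/z /degrade scalerA -/a eds.
by apply/rowP => i; rewrite !mxE ets; ring.
Qed.

(* Both coefficients of the restoration increment lie in [-1, 1]: with
   b = a l = sqrt(l (l - 1)) one has l - 1 <= b <= l. *)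
Lemma restoration_coeffs (R : realType) (G h u : R) (l : nat) :
  0 < G -> 0 < h -> (2 <= l)%N -> u = (l%:R - 1) * h ->
  let a := G * Num.sqrt u * (G * Num.sqrt (l%:R * h))^-1 in
  (l%:R * (1 - a)) ^+ 2 <= 1 /\ ((l%:R - 1) - a * l%:R) ^+ 2 <= 1.
Proof.
move=> G0 h0 l2 eu a.
have lR : (2 : R) <= l%:R by rewrite (ler_nat R 2 l).
have u0 : 0 <= u by rewrite eu; apply: mulr_ge0; lra.
have lh0 : 0 < l%:R * h by apply: mulr_gt0 => //; lra.
have a0 : 0 <= a.
  by rewrite /a !mulr_ge0 ?invr_ge0 ?mulr_ge0 ?sqrtr_ge0 // ltW.
have a2 : a ^+ 2 * l%:R = l%:R - 1.
  rewrite /a !exprMn exprVn exprMn !sqr_sqrtr //; last exact: ltW.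
  rewrite eu; field.
  by rewrite !gt_eqF ?exprn_gt0 //; lra.
have b0 : 0 <= a * l%:R by apply: mulr_ge0 => //; lra.
have bl : a * l%:R <= l%:R by nra.
have bl1 : l%:R - 1 <= a * l%:R by nra.
have -> : l%:R * (1 - a) = l%:R - a * l%:R by ring.
by split; nra.
Qed.

(* Young's inequality with weight h turns an increment bound into a
   one-step growth bound of the form (1 + O(L^2 h)) |x|^2 + O(h). *)
Lemma increment_growth (R : realType) d (h L B : R) (x v : 'rV[R]_d) :
  0 < h -> h <= 1 -> 1 <= L -> 0 <= B ->
  sqn v <= 48 * (L ^+ 2 * sqn x + B) ->
  sqn (x + h *: v) <= (1 + 97 * L ^+ 2 * h) * sqn x + 96 * h * B.
Proof.
move=> h0 h1 L1 B0 hv; apply: le_trans (sqnD_young _ _ h0) _.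
have -> : (1 + h^-1) * sqn (h *: v) = (h + h ^+ 2) * sqn v.
  by rewrite sqnZ mulrA; congr (_ * _); field; rewrite gt_eqF.
have V0 := sqn_ge0 v; have X0 := sqn_ge0 x.
have hv2 : (h + h ^+ 2) * sqn v <= 2 * h * (48 * (L ^+ 2 * sqn x + B)).
  apply: le_trans (_ : 2 * h * sqn v <= _); first by apply: ler_wpM2r => //; nra.
  by apply: ler_wpM2l => //; rewrite mulr_ge0 // ltW.
have hL : 0 <= h * sqn x * (L ^+ 2 - 1).
  by apply: mulr_ge0; [apply: mulr_ge0 => //; exact: ltW | nra].
lra.
Qed.

Lemma discrete_gronwall (R : realDomainType) (E c : R) (u w : nat -> R) :
  1 <= E -> 0 <= c -> (forall i, 0 <= w i) ->
  (forall m, u m.+1 <= E * u m + c * w m) ->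
  forall m, u m <= E ^+ m * (u 0 + c * \sum_(i < m) w i).
Proof.
move=> E1 c0 w0 step; elim=> [|m IH].
  by rewrite expr0 mul1r big_ord0 mulr0 addr0.
apply: le_trans (step m) _; rewrite big_ord_recr /=.
have -> : E ^+ m.+1 * (u 0 + c * (\sum_(i < m) w i + w m)) =
  E * (E ^+ m * (u 0 + c * \sum_(i < m) w i)) + E ^+ m.+1 * (c * w m).
  by rewrite exprS; ring.
apply: lerD; first by apply: ler_wpM2l => //; lra.
by rewrite -[leLHS]mul1r; apply: ler_wpM2r; [exact: mulr_ge0 | exact: exprn_ege1].
Qed.

Lemma pow_le_expR (R : realType) (a : R) (n : nat) : 0 <= a ->
  (1 + a) ^+ n <= expR (n%:R * a).
Proof.
move=> a0; rewrite expRM_natl; apply: lerXn2r; rewrite ?nnegrE ?expR_ge0 //.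
  by rewrite addr_ge0.
exact: expR_ge1Dx.
Qed.

Lemma grid_time (R : realDomainType) (h T : R) (k N : nat) :
  0 <= h -> N%:R * h <= T -> (k <= N)%N -> 0 <= k%:R * h <= T.
Proof.
move=> h0 NT kN; rewrite mulr_ge0 //=; apply: le_trans NT.
by apply: ler_wpM2r => //; rewrite ler_nat.
Qed.

Section SamplerStep.
Variables (R : realType) (d : nat).
Local Notation vec := 'rV[R]_d.
Variables (f : R -> vec -> vec) (g : R -> R) (sc : R -> vec -> vec).
Variables (T L Rb gm h : R) (l : nat).
Hypotheses (h_gt0 : 0 < h) (h_le1 : h <= 1) (l_ge2 : (2 <= l)%N)
  (lhL_le1 : l%:R * h * L <= 1) (L_ge1 : 1 <= L).
Hypothesis f_lip :
  forall t x y, 0 <= t <= T -> sqn (f t x - f t y) <= L ^+ 2 * sqn (x - y).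
Hypothesis f_at0 : forall t, 0 <= t <= T -> sqn (f t 0) <= Rb ^+ 2.
Hypothesis g_bound : forall t, 0 <= t <= T -> 0 < g t /\ g t <= gm.

Lemma drift_growth t y : 0 <= t <= T ->
  sqn (f t y) <= 2 * L ^+ 2 * sqn y + 2 * Rb ^+ 2.
Proof. by move=> ht; apply: affine_growth; [move=> ? ?; exact: f_lip | exact: f_at0]. Qed.

Lemma scaled_score_bound t y : 0 <= t <= T ->
  sqn (g t ^+ 2 *: sc t y) <= gm ^+ 4 * sqn (sc t y).
Proof.
move=> ht; have [g0 ggm] := g_bound ht.
rewrite sqnZ -exprM; apply: ler_wpM2r; first exact: sqn_ge0.
by rewrite lerXn2r // nnegrE ltW //; exact: lt_le_trans ggm.
Qed.

Let budget t x := Rb ^+ 2 + gm ^+ 4 * sqn (sc t x).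

Lemma budget_ge0 t x : 0 <= t <= T -> 0 <= budget t x.
Proof.
move=> ht; have [g0 ggm] := g_bound ht.
by rewrite addr_ge0 ?sqr_ge0 // mulr_ge0 ?sqn_ge0 // exprn_ge0 // (le_trans (ltW g0)).
Qed.

(* The restored point z = x + l h (g^2 s - f) stays within a constant
   factor of x, because l h L <= 1. *)
Lemma restored_point_bound t s x : t - s = l%:R * h ->
  L ^+ 2 * sqn (restore f g sc t s x) <=
  2 * L ^+ 2 * sqn x + 2 * sqn (g t ^+ 2 *: sc t x - f t x).
Proof.
move=> ets; set D := sqn (_ - _).
have -> : restore f g sc t s x = x + (l%:R * h) *: (g t ^+ 2 *: sc t x - f t x).
  by apply/rowP => i; rewrite /restore ets !mxE; ring.
have hz := sqnD2 x ((l%:R * h) *: (g t ^+ 2 *: sc t x - f t x)); rewrite sqnZ -/D in hz.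
have lhL0 : 0 <= l%:R * h * L.
  apply: mulr_ge0; last exact: le_trans ler01 L_ge1.
  by apply: mulr_ge0; [exact: ler0n | exact: ltW].
have lam : (l%:R * h) ^+ 2 * L ^+ 2 <= 1 by rewrite -exprMn exprn_ile1.
have X0 := sqn_ge0 x; have D0 : 0 <= D by exact: sqn_ge0.
have L20 : 0 <= L ^+ 2 by exact: sqr_ge0.
move: (sqn _) ((l%:R * h) ^+ 2) hz lam => Z m hz lam.
nra.
Qed.

Lemma restoration_increment k x : (l <= k)%N -> k%:R * h <= T ->
  exists v, sampler_step f g sc h l k x = x + h *: v /\
    sqn v <= 48 * (L ^+ 2 * sqn x + budget (k%:R * h) x).
Proof.
move=> lk kT; set t := k%:R * h; set s := (k - l)%:R * h.
have t0 : 0 <= t <= T := grid_time (ltW h_gt0) kT (leqnn k).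
have s0 : 0 <= s <= T := grid_time (ltW h_gt0) kT (leq_subr l k).
have [gs0 _] := g_bound s0.
have eu : (k.-1)%:R * h - s = (l%:R - 1) * h.
  have k1 : (1 <= k)%N by apply: leq_trans lk; exact: ltnW.
  by rewrite /s natrB // -subn1 natrB //; ring.
have [hp hr] := restoration_coeffs gs0 h_gt0 l_ge2 eu.
eexists; split; first by apply: restoration_step_form; rewrite lk ltnW.
apply: le_trans (sqn_comb _ _ hp hr) _.
have ets : t - s = l%:R * h by rewrite /t /s natrB //; ring.
have hz := restored_point_bound x ets.
have hfz := drift_growth (restore f g sc t s x) s0.
have hS := scaled_score_bound x t0; have hA := drift_growth x t0.
have hD := sqnB2 (g t ^+ 2 *: sc t x) (f t x).
rewrite /budget; have := sqn_ge0 (g t ^+ 2 *: sc t x); have := sqn_ge0 (f t x).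
have := sqn_ge0 (restore f g sc t s x); have := sqr_ge0 Rb.
nra.
Qed.

(* For k < l the step is an explicit Euler step of the probability flow. *)
Lemma euler_increment k x : (k < l)%N -> 0 <= k%:R * h <= T ->
  exists v, sampler_step f g sc h l k x = x + h *: v /\
    sqn v <= 48 * (L ^+ 2 * sqn x + budget (k%:R * h) x).
Proof.
move=> kl t0; set t := k%:R * h.
exists (2^-1 * g t ^+ 2 *: sc t x - f t x); split.
  by rewrite /sampler_step leqNgt kl /=; apply/rowP => i; rewrite !mxE; ring.
apply: le_trans (sqnB2 _ _) _; rewrite -scalerA sqnZ.
have e4 : (2^-1 : R) ^+ 2 <= 1 by rewrite exprVn invr_le1 ?unitfE ?exprn_ege1 //; lra.
have := scaled_score_bound x t0; have := drift_growth x t0.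
have := sqn_ge0 (g t ^+ 2 *: sc t x); have := sqn_ge0 x; have := budget_ge0 x t0.
have L1 := L_ge1; have : 1 <= L ^+ 2 by nra.
rewrite /budget; nra.
Qed.

Lemma step_growth k x : k%:R * h <= T ->
  sqn (sampler_step f g sc h l k x) <=
  (1 + 97 * L ^+ 2 * h) * sqn x + 96 * h * budget (k%:R * h) x.
Proof.
move=> kT; have t0 := grid_time (ltW h_gt0) kT (leqnn k).
have [v [-> hv]] : exists v, sampler_step f g sc h l k x = x + h *: v /\
    sqn v <= 48 * (L ^+ 2 * sqn x + budget (k%:R * h) x).
  case: (leqP l k) => lk; first exact: restoration_increment.
  exact: euler_increment.
by apply: increment_growth => //; exact: budget_ge0.
Qed.

Lemma sampler_iter_growth (N : nat) x0 : N%:R * h <= T -> forall m,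
  sqn (sampler_iter f g sc h l N x0 m) <= (1 + 97 * L ^+ 2 * h) ^+ m *
    (sqn x0 + 96 * h * \sum_(i < m)
       budget ((N - i)%:R * h) (sampler_iter f g sc h l N x0 i)).
Proof.
move=> NT; apply: (discrete_gronwall (E := 1 + 97 * L ^+ 2 * h) (c := 96 * h)
  (u := fun m => sqn (sampler_iter f g sc h l N x0 m))
  (w := fun i => budget ((N - i)%:R * h) (sampler_iter f g sc h l N x0 i))).
- have L1 := L_ge1; rewrite lerDl; apply: mulr_ge0; [nra | exact: ltW].
- by apply: mulr_ge0 => //; exact: ltW.
- by move=> i; apply: budget_ge0; exact: grid_time (ltW h_gt0) NT (leq_subr i N).
- by move=> m /=; apply: step_growth; case/andP: (grid_time (ltW h_gt0) NT (leq_subr m N)).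
Qed.

Lemma xtilde_growth (N k : nat) x0 : N%:R * h = T -> (k <= N)%N ->
  sqn (xtilde f g sc h l N x0 k) <= expR (97 * L ^+ 2 * T) *
    (sqn x0 + 96 * h * \sum_(i < N.+1)
       budget (i%:R * h) (xtilde f g sc h l N x0 i)).
Proof.
move=> NT kN; have NT' : N%:R * h <= T by rewrite NT.
have L1 := L_ge1; have h0 := h_gt0.
pose W i := budget ((N - i)%:R * h) (sampler_iter f g sc h l N x0 i).
have W0 i : 0 <= W i by apply: budget_ge0; exact: grid_time (ltW h_gt0) NT' (leq_subr i N).
have sumW : \sum_(i < N - k) W i <=
    \sum_(i < N.+1) budget (i%:R * h) (xtilde f g sc h l N x0 i).
  have -> : \sum_(i < N.+1) budget (i%:R * h) (xtilde f g sc h l N x0 i) =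
             \sum_(i < N.+1) W i.
    rewrite (reindex_inj rev_ord_inj) /=; apply: eq_bigr => i _.
    by rewrite /W /xtilde subSS subKn // -ltnS.
  rewrite (big_ord_widen N.+1 W (leq_trans (leq_subr k N) (leqnSn N))).
  by rewrite big_mkcond /=; apply: ler_sum => i _; case: ifP => // _; exact: W0.
have growth : (1 + 97 * L ^+ 2 * h) ^+ (N - k) <= expR (97 * L ^+ 2 * T).
  apply: le_trans (pow_le_expR _ _) _; first by apply: mulr_ge0; [nra | exact: ltW].
  rewrite ler_expR -NT.
  have -> : (N - k)%:R * (97 * L ^+ 2 * h) = 97 * L ^+ 2 * ((N - k)%:R * h) by ring.
  apply: ler_wpM2l; first nra.
  by apply: ler_wpM2r; [exact: ltW | rewrite ler_nat leq_subr].
apply: le_trans (sampler_iter_growth x0 NT' (N - k)) _.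
have S0 : 0 <= \sum_(i < N - k) W i by apply: sumr_ge0.
apply: ler_pM.
- by apply: exprn_ge0; apply: addr_ge0 => //; apply: mulr_ge0; [nra | exact: ltW].
- apply: addr_ge0; first exact: sqn_ge0.
  by apply: mulr_ge0 => //; apply: mulr_ge0 => //; exact: ltW.
- exact: growth.
- rewrite lerD2l; apply: ler_wpM2l => //.
  by apply: mulr_ge0 => //; exact: ltW.
Qed.

End SamplerStep.

Definition sqLipschitz (R : realType) d (phi : 'rV[R]_d -> 'rV[R]_d) :=
  exists K : R, 0 <= K /\ forall x y, sqn (phi x - phi y) <= K * sqn (x - y).

Section SqLipschitz.
Variables (R : realType) (d : nat).
Local Notation vec := 'rV[R]_d.
Implicit Types (p q : vec -> vec).

Lemma sqLipschitz_id : sqLipschitz (fun x : vec => x).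
Proof. by exists 1; split => // x y; rewrite mul1r. Qed.

Lemma sqLipschitzD p q : sqLipschitz p -> sqLipschitz q ->
  sqLipschitz (fun x => p x + q x).
Proof.
move=> [K1 [K10 H1]] [K2 [K20 H2]]; exists (2 * K1 + 2 * K2); split; first lra.
move=> x y; rewrite opprD addrACA; apply: le_trans (sqnD2 _ _) _.
by have := H1 x y; have := H2 x y; have := sqn_ge0 (x - y); nra.
Qed.

Lemma sqLipschitzN p : sqLipschitz p -> sqLipschitz (fun x => - p x).
Proof. by move=> [K [K0 H]]; exists K; split => // x y; rewrite -opprD sqnN. Qed.

Lemma sqLipschitzZ (c : R) p : sqLipschitz p -> sqLipschitz (fun x => c *: p x).
Proof.
move=> [K [K0 H]]; exists (c ^+ 2 * K); split; first by rewrite mulr_ge0 ?sqr_ge0.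
by move=> x y; rewrite -scalerBr sqnZ -mulrA; apply: ler_wpM2l; [exact: sqr_ge0 | exact: H].
Qed.

Lemma sqLipschitz_comp p q : sqLipschitz p -> sqLipschitz q ->
  sqLipschitz (fun x => p (q x)).
Proof.
move=> [K1 [K10 H1]] [K2 [K20 H2]]; exists (K1 * K2); split; first exact: mulr_ge0.
by move=> x y; apply: le_trans (H1 _ _) _; rewrite -mulrA; apply: ler_wpM2l.
Qed.

End SqLipschitz.

Section SamplerLipschitz.
Variables (R : realType) (d : nat).
Local Notation vec := 'rV[R]_d.
Variables (f : R -> vec -> vec) (g : R -> R) (sc : R -> vec -> vec).
Variables (T Lf Ls h : R) (l : nat).
Hypotheses (h_ge0 : 0 <= h) (Lf_ge0 : 0 <= Lf) (Ls_ge0 : 0 <= Ls).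
Hypothesis f_lip :
  forall t x y, 0 <= t <= T -> sqn (f t x - f t y) <= Lf * sqn (x - y).
Hypothesis sc_lip :
  forall t x y, 0 <= t <= T -> sqn (sc t x - sc t y) <= Ls * sqn (x - y).

Lemma sampler_step_sqLipschitz k : k%:R * h <= T ->
  sqLipschitz (sampler_step f g sc h l k).
Proof.
move=> kT.
have f_comp t p : 0 <= t <= T -> sqLipschitz p -> sqLipschitz (fun x => f t (p x)).
  by move=> ht; apply: sqLipschitz_comp; exists Lf; split => // x y; exact: f_lip.
have sc_comp t p : 0 <= t <= T -> sqLipschitz p -> sqLipschitz (fun x => sc t (p x)).
  by move=> ht; apply: sqLipschitz_comp; exists Ls; split => // x y; exact: sc_lip.
have t0 := grid_time h_ge0 kT (leqnn k).
have s0 := grid_time h_ge0 kT (leq_subr l k).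
rewrite /sampler_step /degrade /restore; case: (l <= k)%N => /=.
all: repeat first [ apply: sqLipschitzD | apply: sqLipschitzN | apply: sqLipschitzZ
  | apply: sqLipschitz_id | apply: (f_comp _ _ t0) | apply: (f_comp _ _ s0)
  | apply: (sc_comp _ _ t0) ].
Qed.

Lemma sampler_iter_sqLipschitz N j : N%:R * h <= T ->
  sqLipschitz (fun x => sampler_iter f g sc h l N x j).
Proof.
move=> NT; elim: j => [|j IH] /=; first exact: sqLipschitz_id.
apply: sqLipschitz_comp IH; apply: sampler_step_sqLipschitz.
by case/andP: (grid_time h_ge0 NT (leq_subr j N)).
Qed.

End SamplerLipschitz.

Local Open Scope classical_set_scope.

Section Measurability.
Variables (d0 : measure_display) (Om : measurableType d0) (R : realType) (d : nat).
Local Notation vec := 'rV[R]_d.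
Variable Y : Om -> vec.
Hypothesis Y_meas : forall i, measurable_fun setT (fun w => Y w 0 i).

Lemma box_measurable (lo hi : 'I_d -> R) :
  measurable [set w | forall j, lo j < Y w 0 j < hi j].
Proof.
rewrite (_ : [set w | _] = \bigcap_(j in [set: 'I_d]) [set w | lo j < Y w 0 j < hi j]).
  apply: fin_bigcap_measurable => [|j _]; first exact: finite_finset.
  have := Y_meas j measurableT (measurable_itv `]lo j, hi j[%R); rewrite setTI.
  by congr measurable; apply/seteqP; split => w /=; rewrite in_itv.
by apply/seteqP; split => [w H j _|w H j]; [exact: H | apply: H].
Qed.

Lemma rational_box (F : vec -> R) (K a : R) (x : vec) : 0 <= K ->
  (forall x y, (F y - F x) ^+ 2 <= K * sqn (y - x)) -> a < F x ->
  exists lo hi : 'rV[rat]_d,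
    (forall j, ratr (lo 0 j) < x 0 j < ratr (hi 0 j)) /\
    (forall y : vec, (forall j, ratr (lo 0 j) < y 0 j < ratr (hi 0 j)) -> a < F y).
Proof.
move=> K0 HF ax; set e := F x - a; have e0 : 0 < e by rewrite subr_gt0.
set M := K * d%:R + 1; have M1 : 1 <= M by rewrite lerDr mulr_ge0.
set del := e / M; have del0 : 0 < del by rewrite divr_gt0 //; lra.
have lo_ex j : exists q : rat, (ratr q : R) \in `]x 0 j - del, x 0 j[%R.
  by apply: rat_in_itvoo; rewrite ltrBlDr ltrDl.
have hi_ex j : exists q : rat, (ratr q : R) \in `]x 0 j, x 0 j + del[%R.
  by apply: rat_in_itvoo; rewrite ltrDl.
have [[flo Hlo] [fhi Hhi]] := (choice lo_ex, choice hi_ex).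
exists (\row_j flo j), (\row_j fhi j); split => [j|y Hy].
  by have := Hlo j; have := Hhi j; rewrite !mxE !in_itv /= => /andP[-> _] /andP[_ ->].
have near : sqn (y - x) <= d%:R * del ^+ 2.
  rewrite /sqn; apply: le_trans (_ : \sum_(j < d) del ^+ 2 <= _); last first.
    by rewrite sumr_const card_ord mulr_natl.
  apply: ler_sum => j _; rewrite mxE.
  have := Hy j; have := Hlo j; have := Hhi j; rewrite !mxE !in_itv /=.
  move=> /andP[h1 h2] /andP[h3 h4] /andP[h5 h6]; nra.
have small : K * (d%:R * del ^+ 2) < e ^+ 2.
  have -> : K * (d%:R * del ^+ 2) = (M - 1) * e ^+ 2 / M ^+ 2.
    have -> : M - 1 = K * d%:R by rewrite /M; ring.
    by rewrite /del; field; rewrite gt_eqF //; lra.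
  rewrite ltr_pdivrMr ?exprn_gt0 //; last lra.
  have : 0 < e ^+ 2 by exact: exprn_gt0.
  have : 0 <= M * (M - 1) by apply: mulr_ge0; lra.
  rewrite expr2; nra.
have : (F y - F x) ^+ 2 < e ^+ 2.
  by apply: le_lt_trans (HF x y) _; apply: le_lt_trans small; apply: ler_wpM2l.
rewrite /e; nra.
Qed.

(* A Lipschitz function of a random vector is measurable: the event
   {a < F(Y)} is the countable union, over boxes with rational corners on
   which F > a, of the events that Y lies in the box. *)
Lemma lipschitz_measurable (F : vec -> R) (K : R) : 0 <= K ->
  (forall x y, (F y - F x) ^+ 2 <= K * sqn (y - x)) ->
  measurable_fun setT (fun w => F (Y w)).
Proof.
move=> K0 HF; apply: (measurability _ (RGenOInfty.measurableE R)) => //.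
move=> /= _ [_ [a ->] <-]; rewrite setTI preimage_itvoy.
pose good (lo hi : 'rV[rat]_d) := forall y : vec,
  (forall j, ratr (lo 0 j) < y 0 j < ratr (hi 0 j)) -> a < F y.
pose box (lo hi : 'rV[rat]_d) :=
  [set w | forall j, ratr (lo 0 j) < Y w 0 j < ratr (hi 0 j)].
pose B (n : nat) : set Om := if unpickle n is Some (lo, hi) then
  (if pselect (good lo hi) then box lo hi else set0) else set0.
rewrite (_ : [set w | a < F (Y w)] = \bigcup_n B n).
  apply: bigcupT_measurable => n; rewrite /B.
  case: (unpickle n) => [[lo hi]|] //=; case: pselect => _ //=.
  exact: (box_measurable (fun j => ratr (lo 0 j)) (fun j => ratr (hi 0 j))).
apply/seteqP; split => w /=.
  move=> /(rational_box K0 HF) [lo [hi [inbox Hgood]]].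
  by exists (pickle (lo, hi)) => //; rewrite /B pickleK; case: pselect.
move=> [n _]; rewrite /B; case: (unpickle n) => [[lo hi]|] //=.
by case: pselect => // Hgood /= Hw; exact: Hgood.
Qed.

Lemma sqLipschitz_coord_measurable (p : vec -> vec) : sqLipschitz p ->
  forall i, measurable_fun setT (fun w => p (Y w) 0 i).
Proof.
move=> [K [K0 H]] i; apply: (@lipschitz_measurable (fun x => p x 0 i) K) => // x y.
by apply: le_trans (H y x); have := sqn_coord (p y - p x) i; rewrite !mxE.
Qed.

Lemma sqn_measurable : measurable_fun setT (fun w => sqn (Y w)).
Proof. by apply: measurable_sum => i; exact: measurable_funX. Qed.

End Measurability.

Local Close Scope classical_set_scope.

Local Open Scope ereal_scope.

Section Expectation.
Variables (d0 : measure_display) (Om : measurableType d0) (R : realType).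
Variable P : probability Om R.

Lemma expectation_affine (G : Om -> R) (a b : R) :
  measurable_fun setT G -> (forall w, (0 <= G w)%R) -> (0 <= a)%R -> (0 <= b)%R ->
  \int[P]_w (a + b * G w)%:E = a%:E + b%:E * \int[P]_w (G w)%:E.
Proof.
move=> mG G0 a0 b0; under eq_integral do rewrite EFinD EFinM.
have mGE : measurable_fun setT (fun w => (G w)%:E) by apply/measurable_EFinP.
rewrite ge0_integralD //; first last.
- by apply: emeasurable_funM.
- by move=> w _; rewrite -EFinM lee_fin mulr_ge0.
rewrite integral_cst // [X in (_ * X + _)](_ : _ = 1); last exact: probability_setT.
by rewrite mule1 ge0_integralZl // => w _; rewrite lee_fin.
Qed.

Lemma expectation_sum_le_max (n : nat) (G : 'I_n -> Om -> R) (a b : R) :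
  (forall i, measurable_fun setT (G i)) -> (forall i w, (0 <= G i w)%R) ->
  (0 <= a)%R -> (0 <= b)%R ->
  \int[P]_w (\sum_(i < n) (a + b * G i w))%:E <=
  n%:R%:E * (a%:E + b%:E * \big[maxe/0]_(i < n) \int[P]_w (G i w)%:E).
Proof.
move=> mG G0 a0 b0; under eq_integral do rewrite -sumEFin.
rewrite ge0_integral_sum //; first last.
- by move=> i w _; rewrite lee_fin addr_ge0 ?mulr_ge0.
- move=> i; apply/measurable_EFinP.
  by apply: measurable_funD => //; apply: measurable_funM.
set M := \big[maxe/0]_(i < n) _.
have M0 : 0 <= M by exact: bigmax_ge_id.
have termM i : \int[P]_w (a + b * G i w)%:E <= a%:E + b%:E * M.
  rewrite expectation_affine //; apply: leeD2l; apply: lee_wpmul2l; first by rewrite lee_fin.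
  exact: (@le_bigmax _ _ _ _ (fun i0 : 'I_n => \int[P]_w (G i0 w)%:E)).
apply: (@le_trans _ _ (\sum_(i < n) (a%:E + b%:E * M))).
  by apply: lee_sum => i _; exact: termM.
have : 0 <= a%:E + b%:E * M by apply: adde_ge0; rewrite ?lee_fin // mule_ge0 ?lee_fin.
move: (a%:E + b%:E * M) => x x0; elim: n {G mG G0 M M0 termM} => [|n IH].
  by rewrite big_ord0 mul0e.
by rewrite big_ord_recr /= -natr1 EFinD ge0_muleDl ?lee_fin // mul1e leeD2r.
Qed.

Lemma expectation_energy_bound (N : nat) (U0 Uk : Om -> R) (G : 'I_N.+1 -> Om -> R)
    (K0 a b c : R) :
  measurable_fun setT U0 -> measurable_fun setT Uk ->
  (forall i, measurable_fun setT (G i)) ->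
  (forall w, (0 <= U0 w)%R) -> (forall w, (0 <= Uk w)%R) -> (forall i w, (0 <= G i w)%R) ->
  (0 <= K0)%R -> (0 <= a)%R -> (0 <= b)%R -> (0 <= c)%R ->
  (forall w, (Uk w <= K0 * (U0 w + c * \sum_(i < N.+1) (a + b * G i w)))%R) ->
  \int[P]_w (Uk w)%:E <= K0%:E * (\int[P]_w (U0 w)%:E + (c * N.+1%:R)%:E *
     (a%:E + b%:E * \big[maxe/0]_(i < N.+1) \int[P]_w (G i w)%:E)).
Proof.
move=> mU0 mUk mG U00 Uk0 G0 K00 a0 b0 c0 H.
set S := fun w => (\sum_(i < N.+1) (a + b * G i w))%R.
have mS : measurable_fun setT S.
  by apply: measurable_sum => i; apply: measurable_funD => //; apply: measurable_funM.
have S0 w : (0 <= S w)%R.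
  by apply: sumr_ge0 => i _; apply: addr_ge0 => //; apply: mulr_ge0.
have mSE : measurable_fun setT (fun w => (S w)%:E) by apply/measurable_EFinP.
apply: le_trans (_ : \int[P]_w (K0 * (U0 w + c * S w))%:E <= _).
  apply: ge0_le_integral => //.
  - by move=> w _; rewrite lee_fin.
  - exact/measurable_EFinP.
  - apply/measurable_EFinP; apply: measurable_funM => //.
    by apply: measurable_funD => //; apply: measurable_funM.
  - by move=> w _; rewrite lee_fin.
under eq_integral do rewrite EFinM EFinD EFinM.
rewrite ge0_integralZl //; first last.
- by move=> w _; rewrite -EFinM -EFinD lee_fin addr_ge0 ?mulr_ge0.
- apply: emeasurable_funD; first exact/measurable_EFinP.
  by apply: emeasurable_funM.
apply: lee_wpmul2l; first by rewrite lee_fin.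
rewrite ge0_integralD //; first last.
- by apply: emeasurable_funM.
- by move=> w _; rewrite -EFinM lee_fin mulr_ge0.
- exact/measurable_EFinP.
- by move=> w _; rewrite lee_fin.
apply: leeD2l; rewrite ge0_integralZl //; last by move=> w _; rewrite lee_fin.
rewrite EFinM -muleA; apply: lee_wpmul2l; first by rewrite lee_fin.
exact: expectation_sum_le_max.
Qed.

End Expectation.

Local Close Scope ereal_scope.

Lemma step_size_bounds (R : realFieldType) (h L G2Ls : R) (l : nat) :
  0 < h -> 1 <= L -> 0 <= G2Ls -> (2 <= l)%N ->
  l%:R * h * (1 + L + G2Ls) <= 1 -> l%:R * h * L <= 1 /\ h <= 1.
Proof.
move=> h0 L1 G0 l2 hyp; have lR : (2 : R) <= l%:R by rewrite (ler_nat R 2 l).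
have lhL : l%:R * h * L <= 1.
  by apply: le_trans hyp; apply: ler_wpM2l; [rewrite mulr_ge0 ?ltW //; lra | lra].
have : 0 <= l%:R * h * (L - 1) by rewrite !mulr_ge0 ?subr_ge0 // ltW.
by split => //; nra.
Qed.

Lemma exp_constant_bound (R : realType) (T h L : R) :
  0 < T -> 0 < h -> h <= T -> 1 <= L ->
  expR (97 * L ^+ 2 * T) * (1 + 96 * (T + h)) <= 193 * expR (193 * L ^+ 2 * T).
Proof.
move=> T0 h0 hT L1; have L2 : 1 <= L ^+ 2 by nra.
have LT : T <= L ^+ 2 * T by nra.
have eT : T <= expR (L ^+ 2 * T).
  apply: le_trans (_ : expR T <= _); first by have := expR_ge1Dx T; lra.
  by rewrite ler_expR.
have e1 : 1 <= expR (L ^+ 2 * T) by have := expR_ge1Dx (L ^+ 2 * T); nra.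
apply: le_trans (_ : expR (97 * L ^+ 2 * T) * (193 * expR (L ^+ 2 * T)) <= _).
  by apply: ler_wpM2l; [exact: expR_ge0 | lra].
rewrite mulrCA -expRD; apply: ler_wpM2l => //; rewrite ler_expR; nra.
Qed.

Local Open Scope ereal_scope.

Lemma energy_bound_compare (R : realType) (K0 c' Ce a e : R) (I Q : \bar R) :
  (0 <= K0)%R -> (0 <= c')%R -> (0 <= a)%R -> (0 <= e)%R -> 0 <= I -> 0 <= Q ->
  (K0 * (1 + c') <= Ce)%R ->
  K0%:E * (I + c'%:E * (a%:E + Q)) <= Ce%:E * (I + (a + e)%:E + Q).
Proof.
move=> K00 c0 a0 e0 I0 Q0 HK; have c1 : (0 <= 1 + c')%R by lra.
have aQ : 0 <= a%:E + Q by apply: adde_ge0; rewrite ?lee_fin.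
apply: (@le_trans _ _ (K0%:E * ((1 + c')%:E * (I + (a%:E + Q))))).
  apply: lee_wpmul2l; first by rewrite lee_fin.
  rewrite [X in _ <= X]ge0_muleDr //; apply: leeD.
    by rewrite -[leLHS]mul1e; apply: lee_wpmul2r => //; rewrite lee_fin; lra.
  by apply: lee_wpmul2r => //; rewrite lee_fin; lra.
rewrite muleA -EFinM; apply: lee_pmul => //.
- by rewrite lee_fin mulr_ge0.
- exact: adde_ge0.
- rewrite EFinD -addeA; apply: leeD2l; rewrite -addeA; apply: leeD2l.
  by apply: lee_paddl => //; rewrite lee_fin.
Qed.

Local Close Scope ereal_scope.

Lemma sampler_path_measurable (R : realType) d (f : R -> 'rV[R]_d -> 'rV[R]_d) g sc
    (T Lf Ls h : R) (l N k : nat)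
    (dO : measure_display) (Omega : measurableType dO) (X : Omega -> 'rV[R]_d)
    (p : 'rV[R]_d -> 'rV[R]_d) :
  0 <= h -> 0 <= Lf -> 0 <= Ls -> N%:R * h <= T ->
  (forall t x y, 0 <= t <= T -> sqn (f t x - f t y) <= Lf * sqn (x - y)) ->
  (forall t x y, 0 <= t <= T -> sqn (sc t x - sc t y) <= Ls * sqn (x - y)) ->
  (forall i, measurable_fun setT (fun w => X w 0 i)) -> sqLipschitz p ->
  measurable_fun setT (fun w => sqn (p (xtilde f g sc h l N (X w) k))).
Proof.
move=> h0 Lf0 Ls0 NT f_lip sc_lip mX Lp; apply: sqn_measurable.
apply: (sqLipschitz_coord_measurable mX (p := fun x => p (xtilde f g sc h l N x k))).
apply: sqLipschitz_comp Lp _.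
exact: (@sampler_iter_sqLipschitz _ _ f g sc T Lf Ls h l h0 Lf0 Ls0 f_lip sc_lip
  N (N - k) NT).
Qed.

Lemma sampler_energy_expectation (R : realType) d (f : R -> 'rV[R]_d -> 'rV[R]_d) g sc
    (T L Ls Rb gm h : R) (l N k : nat)
    (dO : measure_display) (Omega : measurableType dO) (P : probability Omega R)
    (X : Omega -> 'rV[R]_d) :
  0 < h -> h <= 1 -> (2 <= l)%N -> l%:R * h * L <= 1 -> 1 <= L -> 0 <= Ls ->
  N%:R * h = T ->
  (forall t x y, 0 <= t <= T -> sqn (f t x - f t y) <= L ^+ 2 * sqn (x - y)) ->
  (forall t, 0 <= t <= T -> sqn (f t 0) <= Rb ^+ 2) ->
  (forall t, 0 <= t <= T -> 0 < g t /\ g t <= gm) ->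
  (forall t x y, 0 <= t <= T -> sqn (sc t x - sc t y) <= Ls * sqn (x - y)) ->
  (forall i, measurable_fun setT (fun w => X w 0 i)) -> (k <= N)%N ->
  (\int[P]_w (sqn (xtilde f g sc h l N (X w) k))%:E <=
   (expR (97 * L ^+ 2 * T))%:E * (\int[P]_w (sqn (X w))%:E +
     (96 * h * N.+1%:R)%:E * ((Rb ^+ 2)%:E + (gm ^+ 4)%:E *
       \big[maxe/0%E]_(i < N.+1)
         \int[P]_w (sqn (sc (i%:R * h) (xtilde f g sc h l N (X w) i)))%:E)))%E.
Proof.
move=> h0 h1 l2 lhL L1 Ls0 NT f_lip f_at0 g_bd sc_lip mX kN.
have NT' : N%:R * h <= T by rewrite NT.
have [g0 ggm] : 0 < g 0 /\ g 0 <= gm.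
  by apply: g_bd; have := grid_time (ltW h0) NT' (leq0n N); rewrite mul0r.
have path_meas k' p : sqLipschitz p ->
    measurable_fun setT (fun w => sqn (p (xtilde f g sc h l N (X w) k'))).
  exact: (sampler_path_measurable g l k' (ltW h0) (sqr_ge0 L) Ls0 NT' f_lip sc_lip mX).
have sc_grid (i : 'I_N.+1) : sqLipschitz (sc (i%:R * h)).
  exists Ls; split => // x y; apply: sc_lip.
  by apply: grid_time (ltW h0) NT' _; rewrite -ltnS ltn_ord.
apply: (expectation_energy_bound P (sqn_measurable mX)
  (path_meas k _ (sqLipschitz_id R d)) (fun i => path_meas i _ (sc_grid i))).
- by move=> w; exact: sqn_ge0.
- by move=> w; exact: sqn_ge0.
- by move=> i w; exact: sqn_ge0.
- exact: expR_ge0.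
- exact: sqr_ge0.
- by apply: exprn_ge0; exact: le_trans (ltW g0) ggm.
- by apply: mulr_ge0 => //; exact: ltW.
- by move=> w; exact: (xtilde_growth sc h0 h1 l2 lhL L1 f_lip f_at0 g_bd (X w) NT kN).
Qed.

Unset Implicit Arguments. Set Strict Implicit.

Theorem mainTheorem12 (R : realType) :
  exists C : R,
  forall (d : nat) (T h : R) (N l : nat)
    (f : R -> 'rV[R]_d -> 'rV[R]_d) (g : R -> R) (q : R -> 'rV[R]_d -> R)
    (Lft Lfx Lsc Rb gmax : R)
    (dO : measure_display) (Omega : measurableType dO) (P : probability Omega R)
    (X : Omega -> 'rV[R]_d),
  0 < T -> 0 < h -> N%:R * h = T ->
  (* (i) *)
  0 <= Lft -> 1 <= Lfx ->
  (forall s t x, 0 <= s <= T -> 0 <= t <= T ->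
     enorm (f t x - f s x) <= Lft * `|t - s|) ->
  (forall t x y, 0 <= t <= T -> enorm (f t x - f t y) <= Lfx * enorm (x - y)) ->
  (* (iii) *)
  (forall t, 0 <= t <= T -> enorm (f t 0) <= Rb) ->
  (* g > 0 and (iv) *)
  (forall t, 0 <= t <= T -> 0 < g t /\ g t <= gmax) ->
  (* q_t smooth positive density (positivity and differentiability used) *)
  (forall t x, 0 < q t x) -> (forall t x, differentiable (q t) x) ->
  (* (v) *)
  0 <= Lsc ->
  (forall t x y, 0 <= t <= T ->
     enorm (score q t x - score q t y) <= Lsc * enorm (x - y)) ->
  (* sampler parameters *)
  (2 <= l)%N ->
  l%:R * h * (1 + Lfx + gmax ^+ 2 * Lsc) <= 1 ->
  (* initial point xtilde_T = X, a random vector *)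
  (forall i, measurable_fun setT (fun w => X w 0 i)) ->
  forall k : nat, (k <= N)%N ->
    (\int[P]_w (sqn (xtilde f g (score q) h l N (X w) k))%:E <=
     (C * expR (C * Lfx ^+ 2 * T))%:E *
     (\int[P]_w (sqn (X w))%:E
      + (Rb ^+ 2 + l%:R ^+ 2 * h ^+ 2 * Lft ^+ 2)%:E
      + (gmax ^+ 4)%:E *
        \big[maxe/0%E]_(k' < N.+1)
          \int[P]_w (sqn (score q (k'%:R * h)
                            (xtilde f g (score q) h l N (X w) k')))%:E))%E.
Proof.
exists 193.
move=> d T h N l f g q Lft Lfx Lsc Rb gmax dO Omega P X T0 h0 NT _ L1 _ f_lip f_at0
  g_bd _ _ Lsc0 sc_lip l2 step_size mX k kN.
have [lhL h1] := step_size_bounds h0 L1 (mulr_ge0 (sqr_ge0 gmax) Lsc0) l2 step_size.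
have hT : h <= T.
  have N1 : (0 < N)%N by rewrite lt0n; apply/eqP => N0; move: T0; rewrite -NT N0 mul0r ltxx.
  by rewrite -NT -[leLHS]mul1r; apply: ler_wpM2r; [exact: ltW | rewrite ler1n].
apply: le_trans (sampler_energy_expectation P h0 h1 l2 lhL L1 (sqr_ge0 Lsc) NT
  (fun t x y ht => sqn_le_lipschitz (le_trans ler01 L1) (f_lip t x y ht))
  (fun t ht => sqn_le_sqr (f_at0 t ht)) g_bd
  (fun t x y ht => sqn_le_lipschitz Lsc0 (sc_lip t x y ht)) mX kN) _.
apply: energy_bound_compare.
- exact: expR_ge0.
- by apply: mulr_ge0 => //; apply: mulr_ge0 => //; exact: ltW.
- exact: sqr_ge0.
- by apply: mulr_ge0; [apply: mulr_ge0|]; exact: sqr_ge0.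
- by apply: integral_ge0 => w _; rewrite lee_fin sqn_ge0.
- apply: mule_ge0; last exact: bigmax_ge_id.
  have [g0 ggm] : 0 < g 0 /\ g 0 <= gmax by apply: g_bd; rewrite lexx ltW.
  by rewrite lee_fin exprn_ge0 // (le_trans (ltW g0)).
- have -> : 96 * h * N.+1%:R = 96 * (T + h) by rewrite -NT -natr1; ring.
  exact: exp_constant_bound.
Qed.
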